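(* (1) Let $T_{ab|cd}$ be the binary 4-taxon tree with split $ab|cd$, and consider the $2$-state GM+I model on it. Then the cubic polynomials $$f_1=\det\begin{pmatrix} p_{1112} & p_{1121} & p_{1122}\\ p_{1212} & p_{1221} & p_{1222}\\ p_{2112} & p_{2121} & p_{2122}\end{pmatrix},\qquad f_2=\det\begin{pmatrix} p_{1211} & p_{1212} & p_{1221}\\ p_{2111} & p_{2112} & p_{2121}\\ p_{2211} & p_{2212} & p_{2221}\end{pmatrix}$$ are phylogenetic invariants. (These are the two $3\times 3$ minors of the flattening $F_{ab|cd}$ that involve neither $p_{1111}$ nor $p_{2222}$.) (2) More generally, let $n\ge 4$, $\kappa\ge 2$, and consider the $\kappa$-state GM+I model on an $n$-taxon tree $T$. Then for each edge $e$ of $T$, every $(\kappa+1)\times(\kappa+1)$ minor of the flattening $F_e$ of $P$ that involves none of the entries $p_{ii\dots i}$, $i\in\{1,\dots,\kappa\}$, is a phylogenetic invariant.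
   Context: An $n$-taxon tree is a tree whose $n$ leaves are labeled by taxa $a_1,\dots,a_n$ and whose internal vertices all have valence at least 3; it is binary if all internal vertices have valence 3. The $\kappa$-state GM+I (general Markov plus invariable sites) model on $T$ with edge set $E$ has parameters: $\delta\in[0,1]$; a probability vector $\pi_I\in[0,1]^\kappa$; a probability vector $\pi_{GM}$ (root distribution) at a chosen root vertex $r$; and for each edge $e=(v\to w)$ (edges directed away from $r$) a $\kappa\times\kappa$ Markov matrix $M_e$ (nonnegative entries, rows summing to 1). The joint distribution at the leaves is the $n$-dimensional $\kappa\times\dots\times\kappa$ array $P=\phi_T(\mathbf s)$ with entries $$p_{i_1\dots i_n}=\delta\,\epsilon(i_1,\dots,i_n)\pi_I(i_1)+(1-\delta)\sum_{(j_v)}\pi_{GM}(j_r)\prod_{e=(u\to w)\in E}M_e(j_u,j_w),$$ where $\epsilon(i_1,\dots,i_n)=1$ if all $i_k$ are equal and $0$ otherwise, and the sum runs over all assignments of states $j_v\in\{1,\dots,\kappa\}$ to all vertices $v$ of $T$ with $j_v=i_k$ when $v$ is the leaf labeled $a_k$. The entries are polynomials in the parameters; extend $\phi_T$ to complex parameter values by the same formulas. A phylogenetic invariant is a polynomial in the $\kappa^n$ indeterminates $p_{i_1\dots i_n}$ vanishing on $\phi_T(\mathbf s)$ for all stochastic parameters $\mathbf s$ (equivalently, on the image of the complexified map). For an edge $e$ of $T$ inducing the split of the taxa into sets $A|B$, the flattening $F_e$ is the $\kappa^{|A|}\times\kappa^{|B|}$ matrix whose rows are indexed by state assignments to taxa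 in $A$, columns by state assignments to taxa in $B$, with entry the corresponding $p_{i_1\dots i_n}$. For $T_{ab|cd}$ with indices in taxon order $a,b,c,d$, $F_{ab|cd}$ is the $4\times4$ matrix with rows indexed by $ab$-states $11,12,21,22$ and columns by $cd$-states $11,12,21,22$. *)

From HB Require Import structures.
From mathcomp Require Import all_boot all_order all_algebra.
From mathcomp Require Export reals.
Set Implicit Arguments. Unset Strict Implicit. Unset Printing Implicit Defensive.
Import Order.TTheory GRing.Theory Num.Theory.
Local Open Scope ring_scope.

(* Trees.  A tree on the finite vertex type V is given together with a      *)
(* chosen root r and a parent map par (par r = r, and every vertex reaches  *)
(* r by iterating par).  Its (undirected) edges are {par v, v} for v != r,  *)
(* directed par v -> v, i.e. away from r.  Taxa a_1..a_n are 'I_n and       *)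
(* leaf t is the leaf labelled by taxon t.                                  *)
Section Tree.
Variables (n : nat) (V : finType) (r : V) (par : V -> V) (leaf : 'I_n -> V).

Definition below (w v : V) : bool := connect (frel par) w v.

Definition children (v : V) : {set V} := [set w | (w != r) && (par w == v)].

Definition valence (v : V) : nat := #|children v| + (v != r).

Definition is_rooted_tree : Prop :=
  par r = r /\ forall v, below v r.

Definition leaf_labelling : Prop :=
  injective leaf /\ forall v, (valence v == 1%N) = [exists t, leaf t == v].

Definition ntaxon_tree : Prop :=
  [/\ is_rooted_tree, leaf_labelling &
      forall v, valence v != 1%N -> (3 <= valence v)%N].

Definition binary_ntaxon_tree : Prop :=
  [/\ is_rooted_tree, leaf_labelling &
      forall v, valence v != 1%N -> valence v = 3%N].

(* the side A of the split A|B induced by the edge par v -> v (v != r):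
   the taxa below v *)
Definition split_set (v : V) : {set 'I_n} := [set t | below (leaf t) v].

Variables (R : realType) (k : nat).

Definition prob_vec (p : 'I_k -> R) : Prop :=
  (forall i, 0 <= p i) /\ \sum_i p i = 1.

Definition markov_mx (M : 'M[R]_k) : Prop :=
  (forall i j, 0 <= M i j) /\ forall i, \sum_j M i j = 1.

(* stochastic parameters; M v is the Markov matrix of edge par v -> v
   (only used for v != r) *)
Definition stochastic_params (delta : R) (piI piGM : 'I_k -> R)
    (M : V -> 'M[R]_k) : Prop :=
  [/\ 0 <= delta <= 1, prob_vec piI, prob_vec piGM &
      forall v, v != r -> markov_mx (M v)].

Definition gmi_dist (delta : R) (piI piGM : 'I_k -> R) (M : V -> 'M[R]_k)
    (x : {ffun 'I_n -> 'I_k}) : R :=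
  delta * (\sum_(i : 'I_k) (if [forall t, x t == i] then piI i else 0))
  + (1 - delta) *
    \sum_(j : {ffun V -> 'I_k} | [forall t, j (leaf t) == x t])
       (piGM (j r) * \prod_(v | v != r) M v (j (par v)) (j v)).

End Tree.

(* Flattenings and their minors.  For A = the A-side of a split, a row of   *)
(* F_e is a state assignment to the taxa in A and a column one to those in  *)
(* B = complement of A.  We represent them by full assignments, of which    *)
(* only the values on A (resp. on B) matter; the entry at (rho, sigma) is   *)
(* P at the merged assignment.                                              *)
Section Flattening.
Variables (R : realType) (n k : nat).

Definition merge (A : {set 'I_n}) (x y : {ffun 'I_n -> 'I_k})
  : {ffun 'I_n -> 'I_k} := [ffun t => if t \in A then x t else y t].

Definition flat_minor (P : {ffun 'I_n -> 'I_k} -> R) (A : {set 'I_n}) (m : nat)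
    (rho sigma : 'I_m -> {ffun 'I_n -> 'I_k}) : R :=
  \det (\matrix_(i, j) P (merge A (rho i) (sigma j))).

Definition distinct_rows (A : {set 'I_n}) (m : nat)
    (rho : 'I_m -> {ffun 'I_n -> 'I_k}) : Prop :=
  forall i i', i != i' -> exists2 t, t \in A & rho i t != rho i' t.

Definition distinct_cols (A : {set 'I_n}) (m : nat)
    (sigma : 'I_m -> {ffun 'I_n -> 'I_k}) : Prop :=
  forall j j', j != j' -> exists2 t, t \notin A & sigma j t != sigma j' t.

Definition avoids_constant (A : {set 'I_n}) (m : nat)
    (rho sigma : 'I_m -> {ffun 'I_n -> 'I_k}) : Prop :=
  forall i j, ~~ [exists c : 'I_k, [forall t, merge A (rho i) (sigma j) t == c]].

End Flattening.

(* Concrete 4-taxon, 2-state notation: p_{ijkl} with i,j,k,l in {1,2}.     *)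
(* Taxa a,b,c,d are 0,1,2,3 and state s in {1,2} is the ordinal s-1.      *)
Definition st4 (i j k l : nat) : {ffun 'I_4 -> 'I_2} :=
  [ffun t : 'I_4 => inord (nth 0%N [:: i; j; k; l] t).-1].

Definition pe (R : Type) (P : {ffun 'I_4 -> 'I_2} -> R) (i j k l : nat) : R :=
  P (st4 i j k l).

Definition mx3 (R : nzRingType) (a b c d e f g h i : R) : 'M[R]_3 :=
  \matrix_(x < 3, y < 3)
    nth 0 (nth [::] [:: [:: a; b; c]; [:: d; e; f]; [:: g; h; i]] x) y.

Definition f1 (R : comNzRingType) (P : {ffun 'I_4 -> 'I_2} -> R) : R :=
  \det (mx3 (pe P 1 1 1 2) (pe P 1 1 2 1) (pe P 1 1 2 2)
            (pe P 1 2 1 2) (pe P 1 2 2 1) (pe P 1 2 2 2)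
            (pe P 2 1 1 2) (pe P 2 1 2 1) (pe P 2 1 2 2)).

Definition f2 (R : comNzRingType) (P : {ffun 'I_4 -> 'I_2} -> R) : R :=
  \det (mx3 (pe P 1 2 1 1) (pe P 1 2 1 2) (pe P 1 2 2 1)
            (pe P 2 1 1 1) (pe P 2 1 1 2) (pe P 2 1 2 1)
            (pe P 2 2 1 1) (pe P 2 2 1 2) (pe P 2 2 2 1)).

Definition split_ab : {set 'I_4} := [set t : 'I_4 | (t < 2)%N].

From Pilot Require Import Defs.
From HB Require Import structures.
From mathcomp Require Import all_boot all_order all_algebra.
From mathcomp Require Import reals ring zify.
Import GRing.Theory Num.Theory.
Local Open Scope ring_scope.

Set Implicit Arguments. Unset Strict Implicit. Unset Printing Implicit Defensive.

(* A minor of F_e avoiding the entries p_{i...i} gets no contribution from the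
   invariable sites, so it is (1 - delta)^(kappa+1) times a minor of the
   flattening of the general Markov distribution.  Summing over the hidden
   states inside the clade below e = (u -> v), outside it, and at v separately,
   that flattening factors through the kappa states of v, hence has rank at
   most kappa. *)

Lemma det_mulmx_thin (F : fieldType) (m : nat)
    (A : 'M[F]_(m.+1, m)) (B : 'M[F]_(m, m.+1)) :
  \det (A *m B) = 0.
Proof.
apply/eqP; apply: contraT; rewrite -unitfE -unitmxE -row_free_unit => /eqP fullAB.
by have := mulmx_max_rank A B; rewrite fullAB ltnn.
Qed.

Lemma mergeE (n k : nat) (A : {set 'I_n}) (x y : {ffun 'I_n -> 'I_k}) t :
  Defs.merge A x y t = if t \in A then x t else y t.
Proof. exact: ffunE. Qed.

Lemma mergeC (n k : nat) (A : {set 'I_n}) (x y : {ffun 'I_n -> 'I_k}) :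
  Defs.merge (~: A) x y = Defs.merge A y x.
Proof. by apply/ffunP => t; rewrite !mergeE inE; case: (t \in A). Qed.

Lemma flat_minorC (R : realType) (n k m : nat) (P : {ffun 'I_n -> 'I_k} -> R)
    (A : {set 'I_n}) (rho sigma : 'I_m -> {ffun 'I_n -> 'I_k}) :
  flat_minor P (~: A) rho sigma = flat_minor P A sigma rho.
Proof.
by rewrite /flat_minor -det_tr; congr (\det _); apply/matrixP => i j; rewrite !mxE mergeC.
Qed.

Lemma avoids_constantC (n k m : nat) (A : {set 'I_n})
    (rho sigma : 'I_m -> {ffun 'I_n -> 'I_k}) :
  avoids_constant A rho sigma -> avoids_constant (~: A) sigma rho.
Proof. by move=> avoid i j; rewrite mergeC. Qed.

Section RootedTree.
Variables (V : finType) (r : V) (par : V -> V).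
Hypothesis tree : is_rooted_tree r par.

Lemma below_par w v : below par w v -> w != v -> below par (par w) v.
Proof.
rewrite /below => /iter_findex; case: (findex _ _ _) => [<-|m]; first by rewrite eqxx.
by rewrite iterSr => <- _; apply: fconnect_iter.
Qed.

Lemma root_below_eq v : below par r v -> v = r.
Proof. by move=> /iter_findex <-; rewrite iter_fix // tree.1. Qed.

Lemma par_not_below v : v != r -> ~~ below par (par v) v.
Proof.
move=> v_neq_r; apply/negP => par_v_below.
have iter_below m : below par (iter m par v) v.
  elim: m => [|m IHm]; first exact: connect0.
  rewrite iterS; have [->|ne] := eqVneq (iter m par v) v; first exact: par_v_below.
  exact: below_par.
have := iter_below (findex par v r); rewrite (iter_findex (tree.2 v)).
by move/root_below_eq => v_eq_r; rewrite v_eq_r eqxx in v_neq_r.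
Qed.

Definition clade (v : V) : {set V} := [set w | below par w v].

Lemma in_own_clade v : v \in clade v.
Proof. by rewrite inE; apply: connect0. Qed.

Lemma root_notin_clade v : v != r -> r \notin clade v.
Proof. by move=> v_neq_r; rewrite inE; apply: contra v_neq_r => /root_below_eq ->. Qed.

Lemma par_in_clade v w : w \in clade v -> w != v -> par w \in clade v.
Proof. by rewrite !inE; apply: below_par. Qed.

Lemma par_notin_clade v w : w \notin clade v -> par w \notin clade v.
Proof. by apply: contra; rewrite !inE; apply: connect_trans (fconnect1 par w). Qed.

Lemma par_notin_own_clade v : v != r -> par v \notin clade v.
Proof. by move=> v_neq_r; rewrite inE par_not_below. Qed.

Lemma leaf_in_clade n (leaf : 'I_n -> V) v t :
  (leaf t \in clade v) = (t \in split_set par leaf v).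
Proof. by rewrite !inE. Qed.

End RootedTree.

Section Glue.
Variables (V : finType) (k : nat) (D : {set V}).
Implicit Types j : {ffun V -> 'I_k}.

Definition glue j1 j2 : {ffun V -> 'I_k} := [ffun w => if w \in D then j1 w else j2 w].

Lemma glueE j1 j2 w : glue j1 j2 w = if w \in D then j1 w else j2 w.
Proof. exact: ffunE. Qed.

Lemma glue_id j : glue j j = j.
Proof. by apply/ffunP => w; rewrite glueE; case: (w \in D). Qed.

Lemma glue_glue_l j1 j2 j3 : glue (glue j1 j2) j3 = glue j1 j3.
Proof. by apply/ffunP => w; rewrite !glueE; case: (w \in D). Qed.

Lemma glue_glue_r j1 j2 j3 : glue j1 (glue j2 j3) = glue j1 j3.
Proof. by apply/ffunP => w; rewrite !glueE; case: (w \in D). Qed.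

(* [glue j1 j0 == j1] says that j1 only carries information on D. *)
Lemma sum_glue (R : nmodType) j0 (F : {ffun V -> 'I_k} -> R) :
  \sum_j F j =
  \sum_(j1 | glue j1 j0 == j1) \sum_(j2 | glue j0 j2 == j2) F (glue j1 j2).
Proof.
rewrite pair_big_dep (reindex_onto (fun p => glue p.1 p.2) (fun j => (glue j j0, glue j0 j))).
  by apply: eq_bigl => -[j1 j2]; rewrite /= glue_glue_l glue_glue_r xpair_eqE.
by move=> j _; rewrite /= glue_glue_l glue_glue_r glue_id.
Qed.

End Glue.

Section GeneralMarkovFlattening.
Variables (R : comNzRingType) (n k : nat) (V : finType) (r : V) (par : V -> V).
Variables (leaf : 'I_n -> V) (piGM : 'I_k -> R) (M : V -> 'M[R]_k).
Implicit Types (x y : {ffun 'I_n -> 'I_k}) (j : {ffun V -> 'I_k}).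

Definition gm_weight j : R := piGM (j r) * \prod_(w | w != r) M w (j (par w)) (j w).

Definition gm_dist x : R :=
  \sum_(j : {ffun V -> 'I_k} | [forall t, j (leaf t) == x t]) gm_weight j.

Hypothesis tree : is_rooted_tree r par.
Variables (v : V) (j0 : {ffun V -> 'I_k}).
Hypothesis v_neq_r : v != r.

Definition clade_weight j : R :=
  \prod_(w | (w \in clade par v) && (w != v)) M w (j (par w)) (j w).

Definition rest_weight j (s : 'I_k) : R :=
  piGM (j r) * \prod_(w | (w != r) && (w \notin clade par v)) M w (j (par w)) (j w)
  * M v (j (par v)) s.

Definition leaves_in_agree (x : {ffun 'I_n -> 'I_k}) (j : {ffun V -> 'I_k}) : bool :=
  [forall t in split_set par leaf v, j (leaf t) == x t].

Definition leaves_out_agree (y : {ffun 'I_n -> 'I_k}) (j : {ffun V -> 'I_k}) : bool :=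
  [forall (t | t \notin split_set par leaf v), j (leaf t) == y t].

Definition clade_factor x (s : 'I_k) : R :=
  \sum_(j | glue (clade par v) j j0 == j)
    (if leaves_in_agree x j && (j v == s) then clade_weight j else 0).

Definition rest_factor y (s : 'I_k) : R :=
  \sum_(j | glue (clade par v) j0 j == j)
    (if leaves_out_agree y j then rest_weight j s else 0).

Lemma gm_weight_glue j1 j2 :
  gm_weight (glue (clade par v) j1 j2) = clade_weight j1 * rest_weight j2 (j1 v).
Proof.
have r_out := root_notin_clade tree v_neq_r.
rewrite /gm_weight (bigID (mem (clade par v))) /=.
rewrite (bigD1 v) /=; last by rewrite v_neq_r in_own_clade.
rewrite !glueE (negbTE r_out) (negbTE (par_notin_own_clade tree v_neq_r)) in_own_clade.
have -> : \prod_(w | (w != r) && (w \in clade par v) && (w != v))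
    M w (glue (clade par v) j1 j2 (par w)) (glue (clade par v) j1 j2 w) = clade_weight j1.
  apply: eq_big => [w|w /andP[/andP[_ w_in] w_neq_v]].
    case w_in: (w \in clade par v); rewrite ?andbF //= andbT.
    by case: (eqVneq w r) w_in => [->|]; rewrite ?(negbTE r_out).
  by rewrite !glueE w_in par_in_clade.
have -> : \prod_(w | (w != r) && (w \notin clade par v))
    M w (glue (clade par v) j1 j2 (par w)) (glue (clade par v) j1 j2 w) =
    \prod_(w | (w != r) && (w \notin clade par v)) M w (j2 (par w)) (j2 w).
  apply: eq_bigr => w /andP[_ w_out].
  by rewrite !glueE (negbTE w_out) (negbTE (par_notin_clade w_out)).
rewrite /clade_weight /rest_weight; ring.
Qed.

Lemma leaf_glueE x y j1 j2 :
  [forall t, glue (clade par v) j1 j2 (leaf t) == Defs.merge (split_set par leaf v) x y t] =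
  leaves_in_agree x j1 && leaves_out_agree y j2.
Proof.
apply/forallP/andP => [agree|[/forall_inP agree_in /forall_inP agree_out] t].
  split; apply/forall_inP => t t_side; have := agree t.
    by rewrite glueE mergeE leaf_in_clade t_side.
  by rewrite glueE mergeE leaf_in_clade (negbTE t_side).
rewrite glueE mergeE leaf_in_clade.
by case: ifP => t_side; [apply: agree_in | apply: agree_out; rewrite t_side].
Qed.

Lemma gm_dist_merge x y :
  gm_dist (Defs.merge (split_set par leaf v) x y) =
  \sum_(s < k) clade_factor x s * rest_factor y s.
Proof.
rewrite /gm_dist big_mkcond (sum_glue (clade par v) j0) /=.
transitivity (\sum_(j1 | glue (clade par v) j1 j0 == j1)
                \sum_(j2 | glue (clade par v) j0 j2 == j2)
   ((if leaves_in_agree x j1 then clade_weight j1 else 0) *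
    (if leaves_out_agree y j2 then rest_weight j2 (j1 v) else 0))).
  apply: eq_bigr => j1 _; apply: eq_bigr => j2 _.
  rewrite leaf_glueE gm_weight_glue.
  by case: (leaves_in_agree x j1); case: (leaves_out_agree y j2); rewrite ?mulr0 ?mul0r.
symmetry; under eq_bigr => s _ do rewrite mulr_suml.
rewrite exchange_big /=; apply: eq_bigr => j1 _.
under eq_bigr => s _ do rewrite mulr_sumr.
rewrite exchange_big /=; apply: eq_bigr => j2 _.
rewrite (bigD1 (j1 v)) //= eqxx andbT big1 ?addr0 // => s s_neq.
by rewrite eq_sym (negbTE s_neq) andbF mul0r.
Qed.

End GeneralMarkovFlattening.

Lemma gmi_dist_nonconstant (R : realType) (n k : nat) (V : finType) (r : V)
    (par : V -> V) (leaf : 'I_n -> V) (delta : R) (piI piGM : 'I_k -> R)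
    (M : V -> 'M[R]_k) (x : {ffun 'I_n -> 'I_k}) :
  ~~ [exists c, [forall t, x t == c]] ->
  gmi_dist r par leaf delta piI piGM M x = (1 - delta) * gm_dist r par leaf piGM M x.
Proof.
move=> nonconst; rewrite /gmi_dist big1 ?mulr0 ?add0r // => c _.
by case: ifP => // x_eq_c; case/negP: nonconst; apply/existsP; exists c.
Qed.

Lemma gmi_flat_minor_eq0 (R : realType) (n k : nat) (V : finType) (r : V)
    (par : V -> V) (leaf : 'I_n -> V) (v : V)
    (rho sigma : 'I_k.+1 -> {ffun 'I_n -> 'I_k}) (delta : R)
    (piI piGM : 'I_k -> R) (M : V -> 'M[R]_k) :
  (0 < k)%N -> is_rooted_tree r par -> v != r ->
  avoids_constant (split_set par leaf v) rho sigma ->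
  flat_minor (gmi_dist r par leaf delta piI piGM M) (split_set par leaf v) rho sigma = 0.
Proof.
move=> k_gt0 tree v_neq_r avoid; rewrite /flat_minor.
pose j0 : {ffun V -> 'I_k} := [ffun=> Ordinal k_gt0].
have -> : \matrix_(i, j) gmi_dist r par leaf delta piI piGM M
            (Defs.merge (split_set par leaf v) (rho i) (sigma j)) =
   (\matrix_(i < k.+1, s < k) ((1 - delta) * clade_factor par leaf M v j0 (rho i) s)) *m
   (\matrix_(s < k, j < k.+1) rest_factor r par leaf piGM M v j0 (sigma j) s).
  apply/matrixP => i j.
  rewrite !mxE gmi_dist_nonconstant // (gm_dist_merge _ _ _ tree j0 v_neq_r).
  by rewrite mulr_sumr; apply: eq_bigr => s _; rewrite !mxE mulrA.
exact: det_mulmx_thin.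
Qed.

Lemma split_ab_minor_eq0 (R : realType) (V : finType) (r : V) (par : V -> V)
    (leaf : 'I_4 -> V) (v : V) (rho sigma : 'I_3 -> {ffun 'I_4 -> 'I_2})
    (delta : R) (piI piGM : 'I_2 -> R) (M : V -> 'M[R]_2) :
  is_rooted_tree r par -> v != r ->
  split_set par leaf v = split_ab \/ split_set par leaf v = ~: split_ab ->
  avoids_constant split_ab rho sigma ->
  flat_minor (gmi_dist r par leaf delta piI piGM M) split_ab rho sigma = 0.
Proof.
move=> tree v_neq_r [<-|split_v] avoid; first exact: gmi_flat_minor_eq0.
rewrite -[split_ab]setCK -split_v flat_minorC gmi_flat_minor_eq0 //.
by rewrite split_v; apply: avoids_constantC.
Qed.

Lemma merge_st4 (a b c d a' b' c' d' : nat) :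
  Defs.merge split_ab (st4 a b c d) (st4 a' b' c' d') = st4 a b c' d'.
Proof. by apply/ffunP => -[[|[|[|[|t]]]] t_lt] //; rewrite mergeE !ffunE inE. Qed.

Lemma st4_constant (a b c d : nat) :
  (a <= 2)%N -> (b <= 2)%N -> (c <= 2)%N -> (d <= 2)%N ->
  [exists s, [forall t, st4 a b c d t == s]] ->
  [&& a.-1 == b.-1, b.-1 == c.-1 & c.-1 == d.-1].
Proof.
move=> a_le b_le c_le d_le /existsP[s /forallP st4_eq].
have st4_val t : val (st4 a b c d t) = val s by rewrite (eqP (st4_eq t)).
have := st4_val 0; have := st4_val 1; have := st4_val 2; have := st4_val 3.
by rewrite !ffunE /= !inordK; lia.
Qed.

Definition ab_rows (s : seq (nat * nat)) (i : 'I_3) : {ffun 'I_4 -> 'I_2} :=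
  st4 (nth (1, 1) s i).1 (nth (1, 1) s i).2 1 1.

Definition cd_cols (s : seq (nat * nat)) (j : 'I_3) : {ffun 'I_4 -> 'I_2} :=
  st4 1 1 (nth (1, 1) s j).1 (nth (1, 1) s j).2.

Lemma f1_flat_minor (R : realType) (P : {ffun 'I_4 -> 'I_2} -> R) :
  f1 P = flat_minor P split_ab (ab_rows [:: (1, 1); (1, 2); (2, 1)]%N)
                               (cd_cols [:: (1, 2); (2, 1); (2, 2)]%N).
Proof.
rewrite /f1 /flat_minor; congr (\det _); apply/matrixP => i j; rewrite !mxE merge_st4.
by case: i => [[|[|[|i]]] i_lt] //; case: j => [[|[|[|j]]] j_lt].
Qed.

Lemma f2_flat_minor (R : realType) (P : {ffun 'I_4 -> 'I_2} -> R) :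
  f2 P = flat_minor P split_ab (ab_rows [:: (1, 2); (2, 1); (2, 2)]%N)
                               (cd_cols [:: (1, 1); (1, 2); (2, 1)]%N).
Proof.
rewrite /f2 /flat_minor; congr (\det _); apply/matrixP => i j; rewrite !mxE merge_st4.
by case: i => [[|[|[|i]]] i_lt] //; case: j => [[|[|[|j]]] j_lt].
Qed.

Lemma f1_avoids_constant :
  avoids_constant split_ab (ab_rows [:: (1, 1); (1, 2); (2, 1)]%N)
                           (cd_cols [:: (1, 2); (2, 1); (2, 2)]%N).
Proof.
move=> i j; rewrite merge_st4; apply/negP.
by case: i j => [[|[|[|i]]] i_lt] // [[|[|[|j]]] j_lt] //= /st4_constant; move/(_ isT isT isT isT).
Qed.

Lemma f2_avoids_constant :
  avoids_constant split_ab (ab_rows [:: (1, 2); (2, 1); (2, 2)]%N)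
                           (cd_cols [:: (1, 1); (1, 2); (2, 1)]%N).
Proof.
move=> i j; rewrite merge_st4; apply/negP.
by case: i j => [[|[|[|i]]] i_lt] // [[|[|[|j]]] j_lt] //= /st4_constant; move/(_ isT isT isT isT).
Qed.

Theorem proposition5 (R : realType) :
  (* (1) binary 4-taxon tree T_{ab|cd}, 2-state GM+I model *)
  (forall (V : finType) (r : V) (par : V -> V) (leaf : 'I_4 -> V),
     binary_ntaxon_tree r par leaf ->
     (exists2 v, v != r &
        split_set par leaf v = split_ab \/ split_set par leaf v = ~: split_ab) ->
     forall (delta : R) (piI piGM : 'I_2 -> R) (M : V -> 'M[R]_2),
       stochastic_params r delta piI piGM M ->
       f1 (gmi_dist r par leaf delta piI piGM M) = 0 /\
       f2 (gmi_dist r par leaf delta piI piGM M) = 0) /\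
  (* (2) general n >= 4, kappa >= 2 *)
  (forall (n k : nat), (4 <= n)%N -> (2 <= k)%N ->
   forall (V : finType) (r : V) (par : V -> V) (leaf : 'I_n -> V),
     ntaxon_tree r par leaf ->
     forall (v : V), v != r ->
     forall (rho sigma : 'I_k.+1 -> {ffun 'I_n -> 'I_k}),
       distinct_rows (split_set par leaf v) rho ->
       distinct_cols (split_set par leaf v) sigma ->
       avoids_constant (split_set par leaf v) rho sigma ->
     forall (delta : R) (piI piGM : 'I_k -> R) (M : V -> 'M[R]_k),
       stochastic_params r delta piI piGM M ->
       flat_minor (gmi_dist r par leaf delta piI piGM M)
                  (split_set par leaf v) rho sigma = 0).
Proof.
split.
  move=> V r par leaf [tree _ _] [v v_neq_r split_v] delta piI piGM M _.
  split; [rewrite f1_flat_minor | rewrite f2_flat_minor];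
    apply: split_ab_minor_eq0 tree v_neq_r split_v _.
    exact: f1_avoids_constant.
  exact: f2_avoids_constant.
move=> n k _ k_ge2 V r par leaf [tree _ _] v v_neq_r rho sigma _ _ avoid delta piI piGM M _.
exact: gmi_flat_minor_eq0 (ltnW k_ge2) tree v_neq_r avoid.
Qed.
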